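(* Let $n\geq1$ and let $E\in\overline{\mathcal{C}}_n$ be the object $E=\left(\bigoplus_{i=1}^nX_i\right)\oplus\left(\bigoplus_{j=1}^{n-1}Y_j\right)$, where $X_i$ is the indecomposable with arc $\ell_{X_i}=\{a_1,z_i\}$ and $Y_j$ the indecomposable with arc $\ell_{Y_j}=\{a_1,a_{j+1}\}$. Then an indecomposable object $M$ lies in $\langle E\rangle_1$ if and only if $\ell_M$ is of the form $\{a_1,y\}$ for some $y\in\overline{\mathscr{M}}$, $y\ne a_1$. Consequently $E$ has a complete orbit in $\overline{\mathscr{M}}$.
   Context: Let $k$ be a field, $S$ the unit circle with anticlockwise orientation. Fix a discrete infinite subset $\mathscr{M}\subset S$ such that every limit point of $\mathscr{M}$ is a limit of both an increasing and a decreasing sequence of $\mathscr{M}$ in the cyclic order, with exactly $n$ such limit points (accumulation points) $a_1,\dots,a_n$ in cyclic order (indices mod $n$); put $\overline{\mathscr{M}}=\mathscr{M}\cup\{a_1,\dots,a_n\}$. For each $i$, $z_i\in\mathscr{M}$ is a fixed marked point in the open segment between $a_i$ and $a_{i+1}$. Each $x\in\mathscr{M}$ has a cyclic predecessor $x^-$ and successor $x^+$ in $\mathscr{M}$; for accumulation points $a^\pm=a$. An arc of $\overline{\mathscr{M}}$ is an unordered pair $\{x_1,x_2\}\subset\overline{\mathscr{M}}$ with $x_2\ne x_1,x_1^-,x_1^+$; arcs cross if their endpoints strictly alternate cyclically; $\{x_1,x_2\}[1]=\{x_1^-,x_2^-\}$. The Paquette–Yıldırım category $\overline{\mathcal{C}}_n$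 is a Hom-finite, $k$-linear, Krull–Schmidt triangulated category with suspension $[1]$ whose indecomposables $X$ correspond bijectively to arcs $\ell_X$ of $\overline{\mathscr{M}}$, with $\ell_{X[1]}=\ell_X[1]$, and $\mathrm{Hom}(X,Y)\cong k$ if $\ell_X$ and $\ell_Y[-1]$ cross, or both have an endpoint at a common accumulation point with $\ell_Y[-1]$ an anticlockwise rotation of $\ell_X$ about it; $0$ otherwise. $\langle E\rangle_1$ is the full subcategory of direct summands of finite direct sums of suspensions of $E$. For indecomposable $X$, its orbit $\overline{\mathscr{M}}_X$ is the set of endpoints of the arcs $\ell_{X[i]}$, $i\in\mathbb{Z}$; for a direct sum of indecomposables the orbit is the union of their orbits; an object has a complete orbit if its orbit is $\overline{\mathscr{M}}$. *)

From HB Require Import structures.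
From mathcomp Require Import all_boot all_order all_algebra.
From mathcomp Require Import finmap.
Set Implicit Arguments. Unset Strict Implicit. Unset Printing Implicit Defensive.
Import GRing.Theory Num.Theory.
Local Open Scope fset_scope.

(* Combinatorial model of \overline{M} with n accumulation points.
   A point is (i, None) = the accumulation point a_{i+1} (0-based index i),
   or (i, Some z) = the z-th point of M in the open segment between
   a_{i+1} and a_{i+2} (indices mod n); each such segment of M has order
   type Z. *)
Definition Pt (n : nat) : Type := ('I_n * option int)%type.

Definition acc {n} (i : 'I_n) : Pt n := (i, None).
Definition mpt {n} (i : 'I_n) (z : int) : Pt n := (i, Some z).

Definition pred_pt {n} (x : Pt n) : Pt n :=
  match x with (i, Some z) => (i, Some (z - 1)%R) | _ => x end.
Definition succ_pt {n} (x : Pt n) : Pt n :=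
  match x with (i, Some z) => (i, Some (z + 1)%R) | _ => x end.

Definition is_arc {n} (A : {fset Pt n}) : Prop :=
  exists x1 x2 : Pt n, A = [fset x1; x2] /\ x2 != x1 /\ x2 != pred_pt x1 /\ x2 != succ_pt x1.

(* k-fold suspension on points: [1] sends x to x^-, [-1] sends x to x^+ *)
Definition shift_pt {n} (k : int) (x : Pt n) : Pt n :=
  match k with
  | Posz m => iter m pred_pt x
  | Negz m => iter m.+1 succ_pt x
  end.

Definition susp {n} (k : int) (A : {fset Pt n}) : {fset Pt n} :=
  [fset shift_pt k x | x in A].

(* Objects of the Krull-Schmidt category, up to isomorphism, are finite
   multisets (sequences up to permutation) of indecomposables, i.e. of arcs. *)
Definition Obj n := seq {fset Pt n}.

Definition susp_obj {n} (k : int) (O : Obj n) : Obj n := map (susp k) O.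

Definition summand {n} (O P : Obj n) : Prop :=
  exists Q : Obj n, perm_eq (O ++ Q) P.

Definition gen1 {n} (E O : Obj n) : Prop :=
  exists ks : seq int, summand O (flatten [seq susp_obj k E | k <- ks]).

Definition in_orbit {n} (E : Obj n) (p : Pt n) : Prop :=
  exists X, X \in E /\ exists k : int, p \in susp k X.

Definition complete_orbit {n} (E : Obj n) : Prop := forall p : Pt n, in_orbit E p.

(* The object E of Proposition 5.7: X_i = {a_1, z_i} (i = 1..n) and
   Y_j = {a_1, a_{j+1}} (j = 1..n-1); here with 0-based indices,
   a_1 = acc i0 (i0 the ordinal 0), z_i = mpt i (z i). *)
Definition objE {n} (i0 : 'I_n) (z : 'I_n -> int) : Obj n :=
  [seq [fset acc i0; mpt i (z i)] | i <- enum 'I_n] ++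
  [seq [fset acc i0; acc j] | j <- [seq j <- enum 'I_n | (0 < val j)%N]].

From mathcomp Require Import all_boot all_order all_algebra finmap.
Local Open Scope fset_scope.
Import GRing.Theory.

Set Implicit Arguments.
Unset Strict Implicit.

(* Suspension translates each segment of M and fixes every accumulation
   point, in particular a_1.  So the suspensions of X_i are exactly the arcs
   {a_1, x} with x in the segment containing z_i, and the Y_j, which are
   fixed, supply the arcs {a_1, a} for the remaining accumulation points a.
   These are all arcs through a_1, and every point lies on one of them,
   which gives the complete orbit. *)

Lemma iter_pred_pt n m (i : 'I_n) (w : int) :
  iter m pred_pt (mpt i w) = mpt i (w - m%:Z)%R.
Proof.
elim: m => [|m IH] /=; first by rewrite subr0.
by rewrite IH /mpt /= -addn1 PoszD opprD addrA.
Qed.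

Lemma iter_succ_pt n m (i : 'I_n) (w : int) :
  iter m succ_pt (mpt i w) = mpt i (w + m%:Z)%R.
Proof.
elim: m => [|m IH] /=; first by rewrite addr0.
by rewrite IH /mpt /= -addn1 PoszD addrA.
Qed.

Lemma shift_pt_mpt n k (i : 'I_n) (w : int) :
  shift_pt k (mpt i w) = mpt i (w - k)%R.
Proof.
case: k => m /=; first exact: iter_pred_pt.
by rewrite -/(iter m.+1 succ_pt _) iter_succ_pt NegzE opprK.
Qed.

Lemma shift_pt_acc n k (i : 'I_n) : shift_pt k (acc i) = acc i.
Proof. by case: k => m /=; elim: m => //= m ->. Qed.

Lemma susp_fset2 n k (x y : Pt n) :
  susp k [fset x; y] = [fset shift_pt k x; shift_pt k y].
Proof.
apply/fsetP => p; apply/imfsetP/fset2P => [[q /= /fset2P [] -> ->]|[] ->]; auto.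
  by exists x; rewrite //= !inE eqxx.
by exists y; rewrite //= !inE eqxx orbT.
Qed.

Lemma gen1_indecomposable n (E : Obj n) (M : {fset Pt n}) :
  gen1 E [:: M] <-> exists X, X \in E /\ exists k, M = susp k X.
Proof.
split.
  case=> ks [Q /perm_mem eqEQ].
  have : M \in flatten [seq susp_obj k E | k <- ks] by rewrite -eqEQ inE eqxx.
  case/flattenP => _ /mapP [k _ ->] /mapP [X XE ->].
  by exists X; split => //; exists k.
case=> X [XE [k ->]]; exists [:: k], (rem (susp k X) (susp_obj k E)).
by rewrite /= cats0 perm_sym; apply/perm_to_rem/map_f.
Qed.

Lemma arc_through_acc n (i0 : 'I_n) (p : Pt n) :
  exists2 y, y != acc i0 & p \in [fset acc i0; y].
Proof.
have [-> | pi0] := eqVneq p (acc i0).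
  exists (mpt i0 0); first by rewrite xpair_eqE andbF.
  by rewrite !inE eqxx.
by exists p; rewrite // !inE eqxx orbT.
Qed.

Section ObjE.

Variables (n : nat) (i0 : 'I_n) (z : 'I_n -> int).
Hypothesis i0_eq0 : val i0 = 0.

Lemma objE_X i : [fset acc i0; mpt i (z i)] \in objE i0 z.
Proof.
by rewrite mem_cat (map_f (fun i => [fset acc i0; mpt i (z i)])) ?mem_enum.
Qed.

Lemma objE_Y j : j != i0 -> [fset acc i0; acc j] \in objE i0 z.
Proof.
move=> ji0; rewrite mem_cat orbC (map_f (fun j => [fset acc i0; acc j])) //.
rewrite mem_filter mem_enum andbT lt0n.
by apply: contra ji0 => /eqP j0; apply/eqP/val_inj; rewrite /= j0 i0_eq0.
Qed.

Lemma susp_objE k X : X \in objE i0 z ->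
  exists2 y, y != acc i0 & susp k X = [fset acc i0; y].
Proof.
rewrite mem_cat => /orP [] /mapP [i]; last first.
  rewrite mem_filter => /andP [i_gt0 _] ->.
  exists (acc i); last by rewrite susp_fset2 !shift_pt_acc.
  by apply: contraTneq i_gt0 => -[->]; rewrite i0_eq0.
move=> _ ->; exists (mpt i (z i - k)%R); first by rewrite xpair_eqE andbF.
by rewrite susp_fset2 shift_pt_acc shift_pt_mpt.
Qed.

Lemma susp_objE_cover y : y != acc i0 ->
  exists2 X, X \in objE i0 z & exists k, [fset acc i0; y] = susp k X.
Proof.
case: y => i [w|] yi0.
  exists [fset acc i0; mpt i (z i)]; first exact: objE_X.
  exists (z i - w)%R; rewrite susp_fset2 shift_pt_acc shift_pt_mpt.
  by rewrite opprB addrC subrK.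
exists [fset acc i0; acc i]; last by exists 0%R; rewrite susp_fset2 !shift_pt_acc.
by apply: objE_Y; apply: contra yi0 => /eqP ->.
Qed.

End ObjE.

Theorem proposition5p7 (n : nat) (hn : (0 < n)%N) (z : 'I_n -> int) :
  let a1 : Pt n := acc (Ordinal hn) in
  (forall M : {fset Pt n}, is_arc M ->
     (gen1 (objE (Ordinal hn) z) [:: M] <->
      exists y : Pt n, y != a1 /\ M = [fset a1; y]))
  /\ complete_orbit (objE (Ordinal hn) z).
Proof.
move=> a1; have i0_eq0 : val (Ordinal hn) = 0 by [].
split=> [M _ | p].
  rewrite gen1_indecomposable; split=> [[X [XE [k ->]]] | [y [ya1 ->]]].
    by have [y ya1 ->] := susp_objE i0_eq0 k XE; exists y.
  have [X XE [k ->]] := susp_objE_cover z i0_eq0 ya1.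
  by exists X; split=> //; exists k.
have [y ya1 py] := arc_through_acc (Ordinal hn) p.
have [X XE [k eqX]] := susp_objE_cover z i0_eq0 ya1.
by exists X; split=> //; exists k; rewrite -eqX.
Qed.
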